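(* Let $W\in\mathbb{D}_n$ be a nonsingular Dale matrix satisfying the Ground Assumption with $\|W\|_F=\sqrt{\mathrm{trace}(W^TW)}<1$. Then for every $b\in\mathbb{R}^n_{\ge0}$ the network $(W,b)$ has a unique fixed point, and it is globally exponentially stable; in particular every fixed point is asymptotically stable. Moreover $\mathcal{C}(W)=\mathcal{SC}(W)=\mathrm{code}(G_\mathcal{E},\mathcal{E_U})$.
   Context: Threshold-linear network: $\dot x_i=-x_i+[\sum_j W_{ij}x_j+b_i]_+$ with $[y]_+=\max(0,y)$; a fixed point is $x^*$ with $x^*=[Wx^*+b]_+$. A Dale matrix $W\in\mathbb{D}_n$ is an $n\times n$ real matrix with a partition $[n]=\mathcal{E}\sqcup\mathcal{I}$ such that $W_{ii}=0$, $W_{ji}\ge0$ for all $j$ if $i\in\mathcal{E}$, $W_{ji}\le 0$ for all $j$ if $i\in\mathcal{I}$. Ground Assumption: $(I-W)_\sigma$ nonsingular for every nonempty $\sigma\subset[n]$. Excitatory support: $\mathrm{supp}_+x=\{i\in\mathcal{E}:x_i>0\}$. Combinatorial code: $\mathcal{C}(W)=\{\mathrm{supp}_+x^*: b\in\mathbb{R}^n_{\ge0},\ x^*\in\mathbb{R}^n_{\ge0}\text{ a fixed point of }(W,b)\}$. Stable combinatorial code: $\mathcal{SC}(W)=\{\mathrm{supp}_+x^*: b\in\mathbb{R}^n_{\ge0},\ x^*\in\mathbb{R}^n_{\ge0}\text{ an asymptotically stable fixed point of }(W,b)\}$. $G_\mathcal{E}$: directed graph on $\mathcal{E}$ with arc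 $i\to j$ iff $i\ne j$ and $W_{ji}>0$. $\mathcal{E_U}=\{j\in\mathcal{E}:W_{ji}=0\ \forall i\in\mathcal{I}\}$. $N^+_G(\sigma)=\bigcup_{i\in\sigma}\{j: i\to j\}$, and $\mathrm{code}(G,U)=\{\sigma\subset\mathcal{E}: N^+_G(\sigma)\cap U\subset\sigma\}$. *)

From HB Require Import structures.
From mathcomp Require Import all_boot all_order all_algebra.
From mathcomp Require Import all_classical all_reals all_analysis.
Set Implicit Arguments. Unset Strict Implicit. Unset Printing Implicit Defensive.
Import Order.TTheory GRing.Theory Num.Theory.
Import numFieldNormedType.Exports.
Local Open Scope classical_set_scope.
Local Open Scope ring_scope.

Section TLN.
Variables (R : realType) (n : nat).
Implicit Types (W : 'M[R]_n) (E : {set 'I_n}) (b x : 'cV[R]_n).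

Definition relu (y : R) : R := Num.max 0 y.

Definition vnorm (v : 'cV[R]_n) : R := Num.sqrt (\sum_i (v i 0) ^+ 2).

Definition frob_norm W : R := Num.sqrt (\tr (W^T *m W)).

Definition dale_matrix W E : Prop :=
  (forall i, W i i = 0) /\
  (forall i j, i \in E -> 0 <= W j i) /\
  (forall i j, i \notin E -> W j i <= 0).

Definition principal_submx (A : 'M[R]_n) (s : {set 'I_n}) : 'M[R]_#|s| :=
  mxsub (@enum_val _ (mem s)) (@enum_val _ (mem s)) A.

Definition ground_assumption W : Prop :=
  forall s : {set 'I_n}, (0 < #|s|)%N -> principal_submx (1%:M - W) s \in unitmx.

Definition nonneg_vec x : Prop := forall i, 0 <= x i 0.

Definition fixed_point W b x : Prop :=
  forall i, x i 0 = relu ((W *m x) i 0 + b i 0).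

(* x : R -> R^n is a solution (forward trajectory on [0,+oo)) of
   dx_i/dt = - x_i + [ (W x)_i + b_i ]_+ *)
Definition is_traj W b (x : R -> 'cV[R]_n) : Prop :=
  (forall i, x s i 0 @[s --> 0^'+] --> x 0 i 0) /\
  (forall t : R, 0 < t -> forall i,
     is_derive t (1 : R) (fun s : R => x s i 0) (- x t i 0 + relu ((W *m x t) i 0 + b i 0))).

Definition asympt_stable W b xs : Prop :=
  fixed_point W b xs /\
  (forall eps : R, 0 < eps -> exists2 delta : R, 0 < delta &
     forall x : R -> 'cV[R]_n, is_traj W b x -> vnorm (x 0 - xs) < delta ->
       forall t : R, 0 <= t -> vnorm (x t - xs) < eps) /\
  (exists2 eta : R, 0 < eta &
     forall x : R -> 'cV[R]_n, is_traj W b x -> vnorm (x 0 - xs) < eta ->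
       vnorm (x t - xs) @[t --> +oo%R] --> 0).

Definition glob_exp_stable W b xs : Prop :=
  fixed_point W b xs /\
  exists M c : R, 0 < M /\ 0 < c /\
    forall x : R -> 'cV[R]_n, is_traj W b x -> forall t : R, 0 <= t ->
      vnorm (x t - xs) <= M * expR (- (c * t)) * vnorm (x 0 - xs).

Definition supp_plus E x : {set 'I_n} := [set i in E | 0 < x i 0].

Definition comb_code W E : set {set 'I_n} :=
  [set s : {set 'I_n} | exists b x, nonneg_vec b /\ nonneg_vec x /\ fixed_point W b x /\
                       s = supp_plus E x].

Definition stable_comb_code W E : set {set 'I_n} :=
  [set s : {set 'I_n} | exists b x, nonneg_vec b /\ nonneg_vec x /\ asympt_stable W b x /\
                       s = supp_plus E x].

Definition arcE W E (i j : 'I_n) : bool :=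
  [&& i \in E, j \in E, i != j & 0 < W j i].

Definition E_U W E : {set 'I_n} :=
  [set j in E | [forall i, (i \notin E) ==> (W j i == 0)]].

Definition out_nbhd W E (s : {set 'I_n}) : {set 'I_n} :=
  [set j | [exists i in s, arcE W E i j]].

Definition graph_code W E (U : {set 'I_n}) : set {set 'I_n} :=
  [set s : {set 'I_n} | (s \subset E) && (out_nbhd W E s :&: U \subset s)].

End TLN.

(* The map [F x = [W x + b]_+] is a contraction for the Euclidean norm, with
   constant [frob_norm W]: the rectification is 1-Lipschitz, and
   [|W v| <= frob_norm W * |v|] by Cauchy-Schwarz.  Hence [F] has a unique fixed
   point [x*], and along any trajectory [V = |x - x*|^2] satisfies
   [V' = 2 <x - x*, F x - x> <= - 2 (1 - frob_norm W) V], so [V] decays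
   exponentially.  Every fixed point is thus globally exponentially, hence
   asymptotically, stable, and the codes C(W) and SC(W) coincide.

   If [x*] is a nonnegative fixed point for [b >= 0], an arc [i -> j] of [G_E]
   from its excitatory support into [E_U] gives [j] positive input and no
   inhibition, so [j] is in the support.  Conversely, for [s] in
   [code(G_E, E_U)] the network restricted to [s] with unit input has a fixed
   point that is positive exactly on [s]; firing all inhibitory neurons at a
   large rate then silences the other excitatory neurons that receive
   inhibition, while those in [E_U] receive no input from [s] by the closure
   condition defining the code. *)

From HB Require Import structures.
From mathcomp Require Import all_boot all_order all_algebra.
From mathcomp Require Import all_classical all_reals all_analysis.
From mathcomp Require Import ring lra.
Import Order.TTheory GRing.Theory Num.Theory.
Import numFieldNormedType.Exports.
Local Open Scope classical_set_scope.
Local Open Scope ring_scope.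
Set Implicit Arguments. Unset Strict Implicit. Unset Printing Implicit Defensive.

Lemma CauchySchwarz_sum (R : realFieldType) (m : nat) (a b : 'I_m -> R) :
  (\sum_i a i * b i) ^+ 2 <= (\sum_i a i ^+ 2) * (\sum_i b i ^+ 2).
Proof.
set A := \sum_i a i ^+ 2; set B := \sum_i b i ^+ 2; set C := \sum_i a i * b i.
have A_ge0 : 0 <= A by apply: sumr_ge0 => i _; exact: sqr_ge0.
have [A0|A_neq0] := eqVneq A 0.
  have a0 i : a i = 0.
    move/eqP: A0; rewrite psumr_eq0 => [/allP/(_ i (mem_index_enum _))|j _].
      by rewrite sqrf_eq0 => /eqP.
    exact: sqr_ge0.
  by rewrite /C big1 ?expr0n ?A0 ?mul0r // => i _; rewrite a0 mul0r.
have A_gt0 : 0 < A by rewrite lt_def A_neq0.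
have expand : \sum_i (C * a i - A * b i) ^+ 2 = A * (A * B - C ^+ 2).
  rewrite (eq_bigr (fun i => C ^+ 2 * a i ^+ 2 - 2 * C * A * (a i * b i)
                              + A ^+ 2 * b i ^+ 2)); last by move=> i _; ring.
  rewrite big_split sumrB /= -!mulr_sumr -/A -/B -/C; ring.
have : 0 <= A * (A * B - C ^+ 2).
  by rewrite -expand; apply: sumr_ge0 => i _; exact: sqr_ge0.
by rewrite pmulr_rge0 // subr_ge0.
Qed.

Lemma ler_of_sqr (R : rcfType) (a b : R) : 0 <= b -> a ^+ 2 <= b ^+ 2 -> a <= b.
Proof.
move=> b0 ab; apply: le_trans (ler_norm a) _.
by rewrite -sqrtr_sqr -(ger0_norm b0) -sqrtr_sqr ler_sqrt // sqr_ge0.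
Qed.

Section Relu.
Variable R : realType.
Implicit Types a c : R.

Lemma relu_ge0 a : 0 <= relu a.
Proof. by rewrite /relu le_max lexx. Qed.

Lemma ler_relu a : a <= relu a.
Proof. by rewrite /relu le_max lexx orbT. Qed.

Lemma ger0_relu a : 0 <= a -> relu a = a.
Proof. by move=> a0; rewrite /relu (max_r a0). Qed.

Lemma ler0_relu a : a <= 0 -> relu a = 0.
Proof. by move=> a0; rewrite /relu (max_l a0). Qed.

Lemma relu_lipschitz_sqr a c : (relu a - relu c) ^+ 2 <= (a - c) ^+ 2.
Proof.
have [a0|a0] := lerP 0 a; have [c0|c0] := lerP 0 c.
- by rewrite !ger0_relu.
- rewrite (ger0_relu a0) (ler0_relu (ltW c0)).
  have : 0 <= - c * (2 * a - c) by apply: mulr_ge0; lra.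
  nra.
- rewrite (ler0_relu (ltW a0)) (ger0_relu c0).
  have : 0 <= - a * (2 * c - a) by apply: mulr_ge0; lra.
  nra.
- by rewrite (ler0_relu (ltW a0)) (ler0_relu (ltW c0)) subrr expr0n /= sqr_ge0.
Qed.

End Relu.

Section SqNorm.
Variables (R : realType) (n : nat).
Implicit Types (A : 'M[R]_n) (b v x y : 'cV[R]_n).

Definition sqnorm v : R := \sum_i v i 0 ^+ 2.
Definition frob_sqnorm A : R := \sum_i \sum_j A i j ^+ 2.
Definition tln_map A b x : 'cV[R]_n := \col_i relu ((A *m x) i 0 + b i 0).

Lemma sqnorm_ge0 v : 0 <= sqnorm v.
Proof. by apply: sumr_ge0 => i _; exact: sqr_ge0. Qed.

Lemma frob_sqnorm_ge0 A : 0 <= frob_sqnorm A.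
Proof. by apply: sumr_ge0 => i _; apply: sumr_ge0 => j _; exact: sqr_ge0. Qed.

Lemma ler_sqnorm v i : v i 0 ^+ 2 <= sqnorm v.
Proof.
by rewrite /sqnorm (bigD1 i) //= lerDl; apply: sumr_ge0 => j _; exact: sqr_ge0.
Qed.

Lemma sqnorm_eq0 v : sqnorm v = 0 -> v = 0.
Proof.
move/eqP; rewrite psumr_eq0 => [/allP v0|i _]; last exact: sqr_ge0.
apply/matrixP => i j; rewrite (ord1 j) mxE.
by have := v0 i (mem_index_enum _); rewrite sqrf_eq0 => /eqP.
Qed.

Lemma sqnorm_contract_eq0 (k : R) v : k < 1 -> sqnorm v <= k * sqnorm v -> v = 0.
Proof.
move=> k1 vk; apply: sqnorm_eq0; apply/eqP; rewrite eq_le sqnorm_ge0 andbT.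
have : (1 - k) * sqnorm v <= 0 by rewrite mulrBl mul1r subr_le0.
by rewrite pmulr_rle0 // subr_gt0.
Qed.

Lemma vnormE v : vnorm v = Num.sqrt (sqnorm v).
Proof. by []. Qed.

Lemma vnorm_ge0 v : 0 <= vnorm v.
Proof. exact: sqrtr_ge0. Qed.

Lemma frob_normE A : frob_norm A = Num.sqrt (frob_sqnorm A).
Proof.
rewrite /frob_norm /frob_sqnorm /mxtrace exchange_big; congr Num.sqrt.
by apply: eq_bigr => i _; rewrite mxE; apply: eq_bigr => j _; rewrite !mxE expr2.
Qed.

Lemma tln_mapE A b x i : tln_map A b x i 0 = relu ((A *m x) i 0 + b i 0).
Proof. by rewrite mxE. Qed.

Lemma fixed_pointE A b x : fixed_point A b x <-> tln_map A b x = x.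
Proof.
split=> [x_fixed|x_fixed i]; last by rewrite -[in LHS]x_fixed tln_mapE.
by apply/matrixP => i j; rewrite (ord1 j) tln_mapE -x_fixed.
Qed.

Lemma sqnorm_mulmx_le A v : sqnorm (A *m v) <= frob_sqnorm A * sqnorm v.
Proof.
rewrite /sqnorm mulr_suml; apply: ler_sum => i _.
by rewrite mxE; exact: CauchySchwarz_sum.
Qed.

Lemma tln_map_lipschitz A b x y :
  sqnorm (tln_map A b x - tln_map A b y) <= frob_sqnorm A * sqnorm (x - y).
Proof.
apply: le_trans (sqnorm_mulmx_le A (x - y)); apply: ler_sum => i _.
rewrite mulmxBr !mxE (le_trans (relu_lipschitz_sqr _ _)) //.
by rewrite opprD addrACA subrr addr0.
Qed.

Lemma iter_tln_map_lipschitz A b N x y :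
  sqnorm (iter N (tln_map A b) x - iter N (tln_map A b) y)
    <= frob_sqnorm A ^+ N * sqnorm (x - y).
Proof.
elim: N => [|N IHN]; first by rewrite expr0 mul1r.
rewrite !iterS; apply: le_trans (tln_map_lipschitz _ _ _ _) _.
by rewrite exprS -mulrA ler_wpM2l // frob_sqnorm_ge0.
Qed.

Lemma tln_map_fixed_point_unique A b x y : frob_sqnorm A < 1 ->
  tln_map A b x = x -> tln_map A b y = y -> x = y.
Proof.
move=> A1 x_fixed y_fixed; apply/subr0_eq/(sqnorm_contract_eq0 A1).
by have := tln_map_lipschitz A b x y; rewrite x_fixed y_fixed.
Qed.

End SqNorm.

(* [banach_fixed_point] needs a complete normed module; on ['cV[R]_n] the
   (max-norm) normed-module and completeness structures are only joined on
   this alias. *)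
Definition cvec (R : realType) n := 'cV[R]_n.
HB.instance Definition _ (R : realType) n := NormedModule.copy (cvec R n) 'cV[R]_n.
HB.instance Definition _ (R : realType) n := Complete.copy (cvec R n) 'cV[R]_n.

Section FixedPointExistence.
Variables (R : realType) (n : nat).
Implicit Types v : cvec R n.

Lemma normr_cvecE v : `|v| = \big[Num.max/0]_ij `|v ij.1 ij.2|.
Proof. exact: mx_normrE. Qed.

Lemma normr_cvec_ge v i : `|v i 0| <= `|v|.
Proof.
rewrite normr_cvecE.
exact: (le_bigmax 0 (fun ij : 'I_n * 'I_1 => `|v ij.1 ij.2|) (i, 0)).
Qed.

Lemma sqr_normr_cvec_le v : `|v| ^+ 2 <= sqnorm v.
Proof.
rewrite -[sqnorm v]sqr_sqrtr ?sqnorm_ge0 // ler_pXn2r ?nnegrE ?sqrtr_ge0 //.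
rewrite normr_cvecE; apply: bigmax_le => [|[i j] _]; first exact: sqrtr_ge0.
by rewrite (ord1 j) /= -sqrtr_sqr ler_sqrt ?sqnorm_ge0 // ler_sqnorm.
Qed.

Lemma sqnorm_le_normr v : sqnorm v <= n%:R * `|v| ^+ 2.
Proof.
apply: (@le_trans _ _ (\sum_(i < n) `|v| ^+ 2)).
  apply: ler_sum => i _; rewrite -real_normK ?num_real // ler_pXn2r ?nnegrE //.
  exact: normr_cvec_ge.
by rewrite sumr_const card_ord mulr_natl.
Qed.

(* The library norm on column vectors is the max norm, for which [tln_map]
   need not contract; a high enough iterate does, because
   [`|v|^2 <= sqnorm v <= n `|v|^2]. *)
Lemma tln_map_fixed_point_exists (A : 'M[R]_n) b : frob_sqnorm A < 1 ->
  exists x, tln_map A b x = x.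
Proof.
move=> A1; pose k := frob_sqnorm A.
have k0 : 0 <= k := frob_sqnorm_ge0 A.
have [N kN] : exists N, k ^+ N < (4 * n.+1%:R)^-1.
  have : (fun N => k ^+ N) @ \oo --> (0 : R) by apply: cvg_expr; rewrite ger0_norm.
  move=> /cvgr0_norm_lt /(_ (4 * n.+1%:R)^-1) [|N _ kN]; first by rewrite invr_gt0.
  by exists N; have := kN N (leqnn N); rewrite ger0_norm ?exprn_ge0.
have kN1 : k ^+ N < 1.
  apply: lt_le_trans kN _; rewrite invf_le1 ?mulr_gt0 // -natr1.
  by have := ler0n R n; lra.
pose G : cvec R n -> cvec R n := iter N (tln_map A b).
have G_half x y : `|G x - G y| <= 2^-1 * `|x - y|.
  apply: ler_of_sqr; first by rewrite mulr_ge0.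
  apply: le_trans (sqr_normr_cvec_le _) _.
  apply: le_trans (iter_tln_map_lipschitz A b N x y) _.
  apply: le_trans (ler_wpM2l (exprn_ge0 N k0) (sqnorm_le_normr (x - y))) _.
  rewrite mulrA exprMn; apply: ler_wpM2r; first exact: sqr_ge0.
  apply: le_trans (ler_wpM2r (ler0n _ n) (ltW kN)) _.
  by rewrite ler_pdivrMl ?mulr_gt0 // -natr1; have := ler0n R n; lra.
have G_contraction : is_contraction
    (totalfun_ [set: cvec R n] G : {fun [set: cvec R n] >-> [set: cvec R n]}).
  exists 2^-1%:nng; split; first by rewrite /= invf_lt1 // ltr1n.
  by move=> [x y] _ /=; exact: G_half.
have [p _ Gp] := banach_fixed_point G_contraction closedT (ex_intro _ 0 I).
have {}Gp : G p = p := esym Gp.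
exists p; apply/subr0_eq/(sqnorm_contract_eq0 kN1).
have GFp : G (tln_map A b p) = tln_map A b p by rewrite /G -iterSr iterS -/G Gp.
by have := iter_tln_map_lipschitz A b N (tln_map A b p) p; rewrite -/G GFp Gp.
Qed.

End FixedPointExistence.

Lemma expR_decay_of_derive (R : realType) (V dV : R -> R) (k : R) :
  (forall t : R, 0 < t -> is_derive t 1 V (dV t)) ->
  (forall t : R, 0 < t -> dV t <= - k * V t) ->
  V s @[s --> 0^'+] --> V 0 ->
  forall t : R, 0 <= t -> V t <= expR (- (k * t)) * V 0.
Proof.
move=> V_der dV_le V0 t t0.
have lin_der (s : R) : is_derive s 1 (fun s => k * s) k.
  apply: is_derive_eq (@is_deriveZ R R^o R^o id k s 1 1 (is_derive_id _ _)) _.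
  by rewrite /GRing.scale /= mulr1.
have exp_der (s : R) : is_derive s 1 (fun s => expR (k * s)) (expR (k * s) * k).
  exact: (is_derive1_comp (f := expR) (g := fun s => k * s) (is_derive_expR _) (lin_der s)).
pose g s := expR (k * s) * V s.
have g_der (s : R) : 0 < s -> is_derive s 1 g (expR (k * s) * (dV s + k * V s)).
  move=> s0; apply: is_derive_eq (is_deriveM (exp_der s) (V_der s s0)) _.
  by rewrite /GRing.scale /=; ring.
have g_cont : {within `[0, +oo[, continuous g}.
  apply: derivable_oy_Rcontinuous_within_itvcy; split.
    by move=> s; rewrite in_itv /= andbT => s0; case: (g_der s s0).
  apply: cvgM V0; apply: cvg_at_right_filter.
  apply: (continuous_comp (f := fun s => k * s) (g := expR)); last exact: continuous_expR.
  exact: (cvgMl_tmp cvg_id).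
have g_t : g t <= g 0.
  apply: (ler0_derive1_nincry _ _ g_cont (lexx 0) t0) => s; rewrite in_itv /= andbT => s0.
    by case: (g_der s s0).
  have gs := g_der s s0; rewrite derive1E derive_val mulr_ge0_le0 ?expR_ge0 //.
  by have := dV_le s s0; rewrite mulNr; lra.
move: g_t; rewrite /g mulr0 expR0 mul1r => g_t.
by rewrite -[V t]mul1r -(expRxMexpNx_1 (k * t)) mulrAC mulrC ler_wpM2l ?expR_ge0.
Qed.

Lemma cvg_expR_decay (R : realType) (c a : R) : 0 < c -> 0 <= a ->
  expR (- (c * t)) * a @[t --> +oo] --> 0.
Proof.
move=> c0 a0; apply/cvgrPdist_le => e e0; near=> t.
rewrite sub0r normrN ger0_norm ?mulr_ge0 ?expR_ge0 //.
rewrite expRN ler_pdivrMl ?expR_gt0 //.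
have ht : a / (c * e) <= t by near: t; apply: nbhs_pinfty_ge; exact: num_real.
rewrite ler_pdivrMr ?mulr_gt0 // in ht.
apply: le_trans (ler_wpM2r (ltW e0) (expR_ge1Dx (c * t))).
nra.
Unshelve. all: end_near. Qed.

Section Trajectory.
Variables (R : realType) (n : nat) (W : 'M[R]_n) (b xs : 'cV[R]_n).
Hypothesis xs_fixed : tln_map W b xs = xs.

Lemma tln_dissipation (x : 'cV[R]_n) :
  \sum_i (x i 0 - xs i 0) * (- x i 0 + relu ((W *m x) i 0 + b i 0))
    <= (frob_norm W - 1) * sqnorm (x - xs).
Proof.
set v := x - xs; set d := tln_map W b x - xs.
have -> : \sum_i (x i 0 - xs i 0) * (- x i 0 + relu ((W *m x) i 0 + b i 0))
    = - sqnorm v + \sum_i v i 0 * d i 0.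
  rewrite /sqnorm -sumrN -big_split /=; apply: eq_bigr => i _.
  by rewrite /v /d !mxE; ring.
rewrite mulrBl mul1r addrC lerD2r frob_normE.
apply: ler_of_sqr; first by rewrite mulr_ge0 ?sqrtr_ge0 ?sqnorm_ge0.
apply: le_trans (CauchySchwarz_sum (fun i => v i 0) (fun i => d i 0)) _.
rewrite -/(sqnorm v) -/(sqnorm d) exprMn sqr_sqrtr ?frob_sqnorm_ge0 // expr2 mulrA.
rewrite mulrC -mulrA [sqnorm v * _]mulrC mulrA ler_wpM2r ?sqnorm_ge0 //.
by have := tln_map_lipschitz W b x xs; rewrite xs_fixed.
Qed.

Variable x : R -> 'cV[R]_n.
Hypothesis x_traj : is_traj W b x.

Lemma traj_sqnorm_derive (t : R) : 0 < t ->
  is_derive t 1 (fun s => sqnorm (x s - xs))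
    (2 * \sum_i (x t i 0 - xs i 0) * (- x t i 0 + relu ((W *m x t) i 0 + b i 0))).
Proof.
move=> t0.
have -> : (fun s => sqnorm (x s - xs)) = \sum_i ((fun s => x s i 0) - cst (xs i 0)) ^+ 2.
  by apply/funext => s; rewrite fct_sumE; apply: eq_bigr => i _; rewrite exprfctE !mxE.
apply: is_derive_eq.
  by apply: is_derive_sum => i; apply: is_deriveX; apply: is_deriveB; exact: x_traj.2.
by rewrite mulr_sumr; apply: eq_bigr => i _; rewrite /GRing.scale /= subr0 expr1 mulrA.
Qed.

Lemma traj_sqnorm_cvg0 :
  (fun s => sqnorm (x s - xs)) @ (0 : R)^'+ --> sqnorm (x 0 - xs).
Proof.
have -> : (fun s => sqnorm (x s - xs))
    = \sum_i (fun s => (x s i 0 - xs i 0) * (x s i 0 - xs i 0)).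
  by apply/funext => s; rewrite fct_sumE; apply: eq_bigr => i _; rewrite !mxE expr2.
have -> : sqnorm (x 0 - xs) = \sum_i (x 0 i 0 - xs i 0) * (x 0 i 0 - xs i 0).
  by apply: eq_bigr => i _; rewrite !mxE expr2.
elim/big_ind2 : _ => [|f a g c fa gc|i _].
- exact: cvg_cst.
- exact: cvgD fa gc.
- by apply: cvgM; (apply: cvgB; [exact: x_traj.1 | exact: cvg_cst]).
Qed.

Lemma traj_sqnorm_decay (t : R) : 0 <= t ->
  sqnorm (x t - xs) <= expR (- (2 * (1 - frob_norm W) * t)) * sqnorm (x 0 - xs).
Proof.
apply: (expR_decay_of_derive traj_sqnorm_derive _ traj_sqnorm_cvg0) => s s0.
by have := tln_dissipation (x s); lra.
Qed.

End Trajectory.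

Section Stability.
Variables (R : realType) (n : nat) (W : 'M[R]_n) (b xs : 'cV[R]_n).

Lemma glob_exp_stable_asympt_stable : glob_exp_stable W b xs -> asympt_stable W b xs.
Proof.
case=> xs_fixed [M [c [M0 [c0 decay]]]].
have decay1 x t : is_traj W b x -> 0 <= t -> vnorm (x t - xs) <= M * vnorm (x 0 - xs).
  move=> x_traj t0; apply: le_trans (decay x x_traj t t0) _.
  rewrite ler_wpM2r ?vnorm_ge0 //; apply: ler_piMr; first exact: ltW.
  by rewrite expR_le1 oppr_le0 mulr_ge0 // ltW.
split=> //; split.
  move=> e e0; exists (e / M) => [|x x_traj x0 t t0]; first by rewrite divr_gt0.
  apply: le_lt_trans (decay1 x t x_traj t0) _.
  by rewrite -(@ltr_pM2l _ M^-1) ?invr_gt0 // mulKf ?gt_eqF // mulrC.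
exists 1 => // x x_traj _.
apply: (@squeeze_cvgr _ _ _ _ (cst 0)
          (fun t => expR (- (c * t)) * (M * vnorm (x 0 - xs)))).
- near=> t; have t0 : 0 <= t by near: t; apply: nbhs_pinfty_ge; exact: num_real.
  by rewrite /cst vnorm_ge0 /= mulrA (mulrC _ M) decay.
- exact: cvg_cst.
- exact: cvg_expR_decay c0 (mulr_ge0 (ltW M0) (vnorm_ge0 _)).
Unshelve. all: end_near. Qed.

Hypotheses (W1 : frob_norm W < 1) (xs_fixed : tln_map W b xs = xs).

Lemma traj_vnorm_decay x : is_traj W b x -> forall t, 0 <= t ->
  vnorm (x t - xs) <= expR (- ((1 - frob_norm W) * t)) * vnorm (x 0 - xs).
Proof.
move=> x_traj t t0; set e := expR _.
rewrite !vnormE -[e](ger0_norm (expR_ge0 _)) -sqrtr_sqr -sqrtrM ?sqr_ge0 //.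
rewrite ler_sqrt; last exact: mulr_ge0 (sqr_ge0 _) (sqnorm_ge0 _).
rewrite /e -expRM_natl (_ : 2%:R * _ = - (2 * (1 - frob_norm W) * t)); last by ring.
exact (traj_sqnorm_decay xs_fixed x_traj t0).
Qed.

Lemma tln_glob_exp_stable : glob_exp_stable W b xs.
Proof.
split; first exact/fixed_pointE.
exists 1, (1 - frob_norm W); do 2!split=> //; first by rewrite subr_gt0.
by move=> x x_traj t t0; rewrite mul1r traj_vnorm_decay.
Qed.

End Stability.

Lemma exists_entry_weight_bound (R : realFieldType) (n : nat) (A : 'M[R]_n) (a : R) :
  0 <= a -> exists2 M, a <= M & forall j k, A j k != 0 -> a <= M * `|A j k|.
Proof.
move=> a0; pose P := \sum_j \sum_k `|A j k|^-1.
(* with the convention [0^-1 = 0], [P] bounds [`|A j k|^-1] for every entry *)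
have P0 : 0 <= P by apply: sumr_ge0 => j _; apply: sumr_ge0 => k _; rewrite invr_ge0.
exists (a * (1 + P)) => [|j k Ajk]; first by apply: ler_peMr => //; rewrite lerDl.
have invP : `|A j k|^-1 <= P.
  apply: (@le_trans _ _ (\sum_l `|A j l|^-1)).
    by rewrite (bigD1 k) //= lerDl; apply: sumr_ge0 => l _; rewrite invr_ge0.
  rewrite [leRHS](bigD1 j) //= lerDl.
  by apply: sumr_ge0 => i _; apply: sumr_ge0 => l _; rewrite invr_ge0.
have A_neq0 : `|A j k| != 0 by rewrite normr_eq0.
have : a <= a * (P * `|A j k|).
  by apply: ler_peMr => //; rewrite -(mulVf A_neq0); exact: ler_wpM2r.
have : 0 <= a * `|A j k| by rewrite mulr_ge0.
lra.
Qed.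

Section Codes.
Variables (R : realType) (n : nat) (W : 'M[R]_n) (E : {set 'I_n}).
Hypothesis W_dale : dale_matrix W E.
Implicit Types (s : {set 'I_n}) (b v x : 'cV[R]_n).

Lemma dale_exc j k : k \in E -> 0 <= W j k.
Proof. exact: W_dale.2.1. Qed.

Lemma dale_inh j k : k \notin E -> W j k <= 0.
Proof. exact: W_dale.2.2. Qed.

Lemma E_U_inh_eq0 j k : j \in E_U W E -> k \notin E -> W j k = 0.
Proof. by rewrite inE => /andP[_ /forallP/(_ k)/implyP Wjk] /Wjk/eqP. Qed.

Lemma not_E_U_inh_lt0 j : j \in E -> j \notin E_U W E -> exists2 k, k \notin E & W j k < 0.
Proof.
move=> jE; rewrite inE jE /= negb_forall => /existsP[k].
by rewrite negb_imply => /andP[kE Wjk]; exists k; rewrite // lt_neqAle Wjk dale_inh.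
Qed.

Lemma exc_input_ge0 v j : (forall k, 0 <= v k 0) -> (forall k, k \notin E -> v k 0 = 0) ->
  0 <= (W *m v) j 0.
Proof.
move=> v0 v_inh; rewrite mxE; apply: sumr_ge0 => k _.
have [kE|kNE] := boolP (k \in E); first by rewrite mulr_ge0 ?dale_exc.
by rewrite v_inh ?mulr0.
Qed.

Lemma inh_input_le v j k : (forall k, 0 <= v k 0) -> (forall k, k \in E -> v k 0 = 0) ->
  k \notin E -> (W *m v) j 0 <= W j k * v k 0.
Proof.
move=> v0 v_exc kNE; rewrite mxE (bigD1 k) //= gerDl; apply: sumr_le0 => l _.
have [lE|lNE] := boolP (l \in E); first by rewrite v_exc ?mulr0.
by rewrite mulr_le0_ge0 ?dale_inh.
Qed.

Lemma inh_input_le0 v j : (forall k, 0 <= v k 0) -> (forall k, k \in E -> v k 0 = 0) ->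
  (W *m v) j 0 <= 0.
Proof.
move=> v0 v_exc; rewrite mxE; apply: sumr_le0 => k _.
have [kE|kNE] := boolP (k \in E); first by rewrite v_exc ?mulr0.
by rewrite mulr_le0_ge0 ?dale_inh.
Qed.

Lemma E_U_input_eq0 v j : j \in E_U W E -> (forall k, k \in E -> v k 0 = 0) ->
  (W *m v) j 0 = 0.
Proof.
move=> jU v_exc; rewrite mxE big1 // => k _.
have [kE|kNE] := boolP (k \in E); first by rewrite v_exc ?mulr0.
by rewrite E_U_inh_eq0 ?mul0r.
Qed.

Lemma graph_code_input_eq0 s v j : graph_code W E (E_U W E) s ->
  j \in E_U W E -> j \notin s -> (forall k, k \notin s -> v k 0 = 0) -> (W *m v) j 0 = 0.
Proof.
move=> /andP[sE s_closed] jU jNs v_out; rewrite mxE big1 // => k _.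
have [ks|kNs] := boolP (k \in s); last by rewrite v_out ?mulr0.
have [->|Wjk] := eqVneq (W j k) 0; first exact: mul0r.
(* otherwise [k -> j] is an arc of [G_E] from [s] into [E_U] *)
have kE : k \in E := fintype.subsetP sE k ks.
have jE : j \in E by move: jU; rewrite inE => /andP[].
have kj : k != j by apply: contraNneq jNs => <-.
case/negP: jNs; apply: (fintype.subsetP s_closed); rewrite inE jU andbT inE.
by apply/existsP; exists k; rewrite ks /arcE kE jE kj lt_def Wjk dale_exc.
Qed.

Lemma supp_plus_graph_code b x : nonneg_vec b -> nonneg_vec x -> fixed_point W b x ->
  graph_code W E (E_U W E) (supp_plus E x).
Proof.
move=> b0 x0 x_fixed; apply/andP; split.
  by apply/fintype.subsetP => i; rewrite inE => /andP[].
apply/fintype.subsetP => j; rewrite inE => /andP[jN jU].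
move: jN; rewrite inE => /existsP[i /andP[]].
rewrite inE => /andP[iE xi] /and4P[_ jE _ Wji].
rewrite inE jE x_fixed; apply: lt_le_trans (ler_relu _).
have : W j i * x i 0 <= (W *m x) j 0.
  rewrite mxE (bigD1 i) //= lerDl; apply: sumr_ge0 => k _.
  have [kE|kNE] := boolP (k \in E); first by rewrite mulr_ge0 ?dale_exc.
  by rewrite E_U_inh_eq0 ?mul0r.
by have := mulr_gt0 Wji xi; have := b0 j; lra.
Qed.

Hypothesis W1 : frob_sqnorm W < 1.

Lemma exc_restricted_fixed_point s : s \subset E ->
  exists y : 'cV[R]_n, [/\ forall i, 0 <= y i 0, forall i, i \notin s -> y i 0 = 0
                          & forall i, i \in s -> y i 0 = (W *m y) i 0 + 1].
Proof.
move=> sE.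
pose A : 'M[R]_n := \matrix_(i, j) (if (i \in s) && (j \in s) then W i j else 0).
pose c : 'cV[R]_n := \col_i (if i \in s then 1 else 0).
have A1 : frob_sqnorm A < 1.
  apply: le_lt_trans W1; apply: ler_sum => i _; apply: ler_sum => j _.
  by rewrite mxE; case: ifP => _ //; rewrite expr0n /= sqr_ge0.
have [y y_fixed] := tln_map_fixed_point_exists c A1.
have yE i : y i 0 = relu ((A *m y) i 0 + c i 0) by rewrite -[in LHS]y_fixed tln_mapE.
have y0 i : 0 <= y i 0 by rewrite yE relu_ge0.
have y_out i : i \notin s -> y i 0 = 0.
  move=> iNs; rewrite yE !mxE (negbTE iNs) /= addr0 big1 ?ler0_relu // => j _.
  by rewrite mxE (negbTE iNs) mul0r.
exists y; split=> // i i_s.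
have AyE : (A *m y) i 0 = (W *m y) i 0.
  rewrite !mxE; apply: eq_bigr => j _; rewrite mxE i_s /=.
  by case: ifP => // /negbT j_s; rewrite y_out // !mulr0.
rewrite yE AyE [c i 0]mxE i_s ger0_relu //; apply: addr_ge0 => //.
apply: exc_input_ge0 => // k kE; apply: y_out; apply: contra kE.
exact: (fintype.subsetP sE).
Qed.

Lemma graph_code_realizable s : graph_code W E (E_U W E) s ->
  exists b x, [/\ nonneg_vec b, nonneg_vec x, tln_map W b x = x & s = supp_plus E x].
Proof.
move=> s_code; have sE : s \subset E by case/andP: s_code.
have s_exc i : i \in s -> i \in E := fintype.subsetP sE i.
have [y [y0 y_out y_in]] := exc_restricted_fixed_point sE.
have Wy0 j : 0 <= (W *m y) j 0.
  by apply: exc_input_ge0 => // k kE; apply: y_out; apply: contra kE; exact: s_exc.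
pose a := \sum_j (W *m y) j 0.
have a0 : 0 <= a by apply: sumr_ge0.
have Wy_le_a j : (W *m y) j 0 <= a by rewrite /a (bigD1 j) //= lerDl; apply: sumr_ge0.
have [M a_le_M M_bound] := exists_entry_weight_bound W a0.
have M0 : 0 <= M := le_trans a0 a_le_M.
(* Firing every inhibitory neuron at rate [M] silences the excitatory neurons
   outside [s] that receive inhibition; those in [E_U] receive no input at all. *)
pose u : 'cV[R]_n := \col_k (if k \in E then 0 else 1).
have u0 k : 0 <= u k 0 by rewrite mxE; case: ifP.
have u_exc k : k \in E -> u k 0 = 0 by rewrite mxE => ->.
pose x := y + M *: u.
have xE i : x i 0 = y i 0 + M * (if i \in E then 0 else 1) by rewrite !mxE.
have x0 i : 0 <= x i 0 by rewrite xE addr_ge0 // mulr_ge0 //; case: ifP.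
have Wu_le0 j : (W *m u) j 0 <= 0 := inh_input_le0 j u0 u_exc.
have WxE j : (W *m x) j 0 = (W *m y) j 0 + M * (W *m u) j 0.
  by rewrite mulmxDr -scalemxAr !mxE.
pose b : 'cV[R]_n :=
  \col_i (if (i \in s) || (i \notin E) then x i 0 - (W *m x) i 0 else 0).
exists b, x; split=> //.
- move=> i; rewrite mxE; case: ifP => // /orP[i_s|iNE]; rewrite subr_ge0 WxE xE.
    rewrite (s_exc i i_s) /= mulr0 addr0 (y_in i i_s).
    by have := mulr_ge0_le0 M0 (Wu_le0 i); lra.
  have iNs : i \notin s by apply: contra iNE; exact: s_exc.
  rewrite (negbTE iNE) /= mulr1 (y_out i iNs).
  by have := mulr_ge0_le0 M0 (Wu_le0 i); have := Wy_le_a i; lra.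
- apply/matrixP => i j; rewrite (ord1 j) tln_mapE [b i 0]mxE.
  case: ifP => [_|/negbT]; first by rewrite addrCA subrr addr0 ger0_relu.
  rewrite negb_or negbK => /andP[iNs iE].
  rewrite addr0 xE iE /= mulr0 addr0 (y_out i iNs); apply: ler0_relu; rewrite WxE.
  have [iU|iNU] := boolP (i \in E_U W E).
    rewrite (graph_code_input_eq0 s_code iU iNs y_out) (E_U_input_eq0 iU u_exc).
    by rewrite mulr0 addr0.
  have [k kNE Wik] := not_E_U_inh_lt0 iE iNU.
  have := ler_wpM2l M0 (inh_input_le i u0 u_exc kNE).
  have := M_bound i k (negbT (lt_eqF Wik)).
  rewrite ltr0_norm // [u k 0]mxE (negbTE kNE) /= mulr1 mulrN.
  by have := Wy_le_a i; lra.
- apply/setP => i; rewrite inE xE.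
  have [i_s|iNs] := boolP (i \in s).
    rewrite (s_exc i i_s) /= mulr0 addr0 (y_in i i_s).
    by apply/esym; have := Wy0 i; lra.
  have [iE|iNE] := boolP (i \in E) => //=.
  by rewrite mulr0 addr0 (y_out i iNs) ltxx.
Qed.

End Codes.

Unset Implicit Arguments.

Theorem mainTheorem5 (R : realType) (n : nat) (W : 'M[R]_n) (E : {set 'I_n}) :
  dale_matrix W E ->
  W \in unitmx ->
  ground_assumption W ->
  frob_norm W < 1 ->
  (forall b : 'cV[R]_n, nonneg_vec b ->
     (exists! xs : 'cV[R]_n, fixed_point W b xs) /\
     (forall xs, fixed_point W b xs -> glob_exp_stable W b xs) /\
     (forall xs, fixed_point W b xs -> asympt_stable W b xs)) /\
  comb_code W E = stable_comb_code W E /\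
  stable_comb_code W E = graph_code W E (E_U W E).
Proof.
move=> W_dale _ _ W1.
have W1' : frob_sqnorm W < 1 by rewrite -ltr_sqrt ?ltr01 // sqrtr1 -frob_normE.
have fp_stable b xs : fixed_point W b xs -> glob_exp_stable W b xs /\ asympt_stable W b xs.
  move=> /fixed_pointE xs_fixed; have xs_ges := tln_glob_exp_stable W1 xs_fixed.
  by split; last exact: glob_exp_stable_asympt_stable.
have codes_eq : comb_code W E = stable_comb_code W E.
  apply/seteqP; split=> s [b [x [b0 [x0 [x_fixed ->]]]]]; exists b, x.
    by split; [|split; [|split]] => //; exact: (fp_stable _ _ x_fixed).2.
  by split; [|split; [|split]] => //; case: x_fixed.
split.
  move=> b _; have [xs xs_fixed] := tln_map_fixed_point_exists b W1'.
  split; last by split=> ys /fp_stable[].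
  exists xs; split; first exact/fixed_pointE.
  by move=> ys /fixed_pointE ys_fixed; exact: tln_map_fixed_point_unique W1' xs_fixed ys_fixed.
split=> //; rewrite -codes_eq; apply/seteqP; split=> s.
  by case=> b [x [b0 [x0 [x_fixed ->]]]]; exact: supp_plus_graph_code.
case/(graph_code_realizable W_dale W1') => b [x [b0 x0 x_fixed ->]].
by exists b, x; do !split=> //; exact/fixed_pointE.
Qed.
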